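(* Let $n=5$ and let $\mathcal{K}=\{1,2,3\}$. For every channel matrix $\boldsymbol{D}=(d_{ji})_{j,i\in\mathcal{K}}$ whose entries are monomials $d_{ji}=x^{k_{ji}}$ ($k_{ji}\in\mathbb{N}$), there is no choice of transmission offsets $p_{ji}\in\{0,1,\dots,4\}$, $i,j\in\mathcal{K}$ (one message $W_{ji}$ per transmitter–receiver pair, i.e. $m_{ji}=1$), such that all separability conditions (S1), (S2), (S3) hold simultaneously. In other words, perfect Cyclic Interference Alignment achieving $\frac{9}{5}$ degrees of freedom with $n=5$ dimensions is infeasible on the $3$-user $X$-network.
   Context: Cyclic polynomial channel model of the $3$-user $X$-network. Fix $n\in\mathbb{N}$; all congruences are taken in the polynomial ring modulo $x^n-1$, so $x^a\equiv x^b \pmod{x^n-1}$ iff $a\equiv b \pmod n$. Let $\mathcal{K}=\{1,2,3\}$. Transmitter $\mathrm{Tx}_i$ holds one message $W_{ji}$ for each receiver $\mathrm{Rx}_j$ ($9$ messages in total), each message being an element of an abelian group (binary strings of length $t$). $\mathrm{Tx}_i$ chooses offsets $p_{ji}\in\{0,\dots,n-1\}$ and transmits $u_i(x)\equiv\sum_{j\in\mathcal{K}}W_{ji}x^{p_{ji}}$. The channel matrix is $\boldsymbol{D}=(d_{ji})$ with each $d_{ji}$ a monomial $x^{k}$, $k\in\mathbb{N}$ (a cyclic shift), known to all users. Receiver $\mathrm{Rx}_j$ observes $r_j(x)\equiv\sum_{i\in\mathcal{K}}d_{ji}u_i(x)$, whose coefficient at $x^m$ is the sum of all messages arriving at offset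 $m$. At $\mathrm{Rx}_a$ the dedicated signals are $d_{al}x^{p_{al}}$ ($l\in\mathcal{K}$) and the interfering signals are $d_{al}x^{p_{bl}}$ with $l\in\mathcal{K}$, $b\ne a$. Separability conditions: (S1) intra-user: for each $i$, $x^{p_{1i}},x^{p_{2i}},x^{p_{3i}}$ are pairwise incongruent; (S2) multiple-access: for each $a$, the three dedicated signals $d_{a1}x^{p_{a1}},d_{a2}x^{p_{a2}},d_{a3}x^{p_{a3}}$ are pairwise incongruent; (S3) inter-user: for each $a$, every dedicated signal at $\mathrm{Rx}_a$ is incongruent to every interfering signal at $\mathrm{Rx}_a$. A message is received interference-free if it occupies an offset at its intended receiver containing no other message; the degrees of freedom are $M/n$ with $M$ the number of dedicated messages received interference-free. *)

From mathcomp Require Import all_boot.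
Set Implicit Arguments. Unset Strict Implicit. Unset Printing Implicit Defensive.

(* Monomials x^a modulo x^n - 1 are represented by their exponent a : nat;
   x^a == x^b (mod x^n - 1) iff a = b (mod n). *)
Definition mono_cong (n a b : nat) : Prop := a = b %[mod n].

(* Users K = {1,2,3} are indexed by 'I_3.
   k j i : exponent of d_{ji} = x^(k j i)  (receiver j, transmitter i).
   p j i : offset of message W_{ji} at transmitter i, in {0,...,n-1}. *)

Definition S1 (n : nat) (p : 'I_3 -> 'I_3 -> 'I_n) : Prop :=
  forall i j j' : 'I_3, j != j' -> ~ mono_cong n (p j i) (p j' i).

Definition S2 (n : nat) (k : 'I_3 -> 'I_3 -> nat) (p : 'I_3 -> 'I_3 -> 'I_n) : Prop :=
  forall a l l' : 'I_3, l != l' ->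
    ~ mono_cong n (k a l + p a l) (k a l' + p a l').

Definition S3 (n : nat) (k : 'I_3 -> 'I_3 -> nat) (p : 'I_3 -> 'I_3 -> 'I_n) : Prop :=
  forall a b l l' : 'I_3, b != a ->
    ~ mono_cong n (k a l + p a l) (k a l' + p b l').

From mathcomp Require Import all_boot all_algebra.
From mathcomp Require Import ring.

Set Implicit Arguments. Unset Strict Implicit. Unset Printing Implicit Defensive.

Import GRing.Theory.
Local Open Scope ring_scope.

(* At receiver a the three dedicated
   signals occupy three distinct slots (S2), so only two slots are free; the
   two interfering signals of any transmitter l are distinct (S1) and avoid
   the dedicated slots (S3), hence they fill exactly these two free slots.
   So the unordered pair {k_al + p_bl, k_al + p_cl} (b, c the other two
   receivers) does not depend on l, and neither do its symmetric functions:
   the sum 2 k_al + p_bl + p_cl and the squared gap (p_bl - p_cl)^2.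
   A nonzero square of F_5 is 1 or -1, so among the three gaps of transmitter
   0 two coincide: some receiver a is equidistant from the other two, at
   transmitter 0 and hence, by constancy of gaps, at every transmitter.  In an
   integral domain equidistance forces p_bl + p_cl = 2 p_al, so the constant
   sum at receiver a equals 2 (k_al + p_al), and since 2 is a unit the three
   dedicated signals of receiver a coincide, contradicting (S2). *)

Lemma set2_sym (T : finType) (R : Type) (f : T -> T -> R) (x y x' y' : T) :
  (forall u v, f u v = f v u) -> [set x; y] = [set x'; y'] -> f x y = f x' y'.
Proof.
move=> fC E.
have /set2P x_in : x \in [set x'; y'] by rewrite -E set21.
have /set2P y_in : y \in [set x'; y'] by rewrite -E set22.
have /set2P x'_in : x' \in [set x; y] by rewrite E set21.
have /set2P y'_in : y' \in [set x; y] by rewrite E set22.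
case: x_in y_in => ? [] ?; subst => //.
- by case: y'_in => ->.
- by case: x'_in => ->.
Qed.

Lemma collide_in_pair (T : eqType) (e1 e2 u v w : T) :
  u \in [:: e1; e2] -> v \in [:: e1; e2] -> w \in [:: e1; e2] ->
  [\/ u = v, u = w | v = w].
Proof.
by rewrite !inE => /orP[]/eqP-> /orP[]/eqP-> /orP[]/eqP->;
  do ?[exact: Or31 | exact: Or32 | exact: Or33].
Qed.

Lemma equidistant_midpoint (R : idomainType) (x y z : R) :
  y != z -> (x - y) ^+ 2 = (x - z) ^+ 2 -> y + z = x *+ 2.
Proof.
move=> yz /eqP; rewrite eqf_sqr => /orP[/eqP/addrI/oppr_inj yzE | /eqP E].
  by rewrite yzE eqxx in yz.
by rewrite opprB in E; rewrite -[z](subrK x) -E; ring.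
Qed.

Lemma sqr_gapC (R : pzRingType) (u v : R) : (u - v) ^+ 2 = (v - u) ^+ 2.
Proof. by rewrite -opprB sqrrN. Qed.

Lemma natF5_eq (m n : nat) : ((m%:R : 'F_5) == n%:R) = (m == n %[mod 5])%N.
Proof. by rewrite !Zp_nat -val_eqE. Qed.

Lemma sqr_F5 (d : 'F_5) : d != 0 -> d ^+ 2 \in [:: 1; -1].
Proof. by case: d => [[|[|[|[|[|]]]]]]. Qed.

Lemma third_user (b c : 'I_3) : exists a : 'I_3, (a != b) && (a != c).
Proof.
by case: b c => [[|[|[|//]]] ?] [[|[|[|//]]] ?];
  [exists 2 | exists 2 | exists 1 | exists 2 | exists 0 | exists 0
  | exists 1 | exists 0 | exists 0].
Qed.

Section Alignment.

Variables (k : 'I_3 -> 'I_3 -> nat) (p : 'I_3 -> 'I_3 -> 'I_5).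
Hypotheses (intra : S1 p) (mac : S2 k p) (inter : S3 k p).

(* Offset of W_{bl}, channel shift d_{al}, and the position at which W_{bl}
   reaches receiver a, all as residues in F_5. *)
Definition offset (b l : 'I_3) : 'F_5 := (p b l : nat)%:R.
Definition shift (a l : 'I_3) : 'F_5 := (k a l)%:R.
Definition signal (a b l : 'I_3) : 'F_5 := shift a l + offset b l.

Definition dedicated (a : 'I_3) : {set 'F_5} := [set signal a a l | l : 'I_3].

Lemma signal_neq a b l a' b' l' :
  ~ mono_cong 5 (k a l + p b l) (k a' l' + p b' l') ->
  signal a b l != signal a' b' l'.
Proof. by rewrite /signal /shift /offset -!natrD natF5_eq => /eqP. Qed.

Lemma offset_neq b c l : b != c -> offset b l != offset c l.
Proof.
move=> bc; apply/eqP => E; apply: (@intra l b c bc).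
by apply/eqP; rewrite -natF5_eq; apply/eqP.
Qed.

Lemma card_dedicated a : #|dedicated a| = 3%N.
Proof.
rewrite card_imset ?card_ord // => l l' E.
by apply/eqP/negPn/negP => /(@mac a l l') /signal_neq; rewrite E eqxx.
Qed.

Lemma interference_fills_free_slots a b c l :
  b != a -> c != a -> b != c ->
  [set signal a b l; signal a c l] = ~: dedicated a.
Proof.
move=> ba ca bc.
have card_free : #|~: dedicated a| = 2%N.
  by apply/eqP; rewrite -(eqn_add2l 3) -{1}(card_dedicated a) cardsC card_Fp.
have signals_neq : signal a b l != signal a c l.
  by rewrite /signal (inj_eq (addrI _)) offset_neq.
apply/eqP; rewrite eqEcard card_free cards2 signals_neq andbT.
apply/subsetP => x /set2P[]-> ; rewrite inE;
  apply/imsetP => -[l' _ /eqP]; apply/negP; rewrite eq_sym; apply: signal_neq;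
  exact: inter.
Qed.

Lemma interference_pair_constant a b c l l' :
  b != a -> c != a -> b != c ->
  [set signal a b l; signal a c l] = [set signal a b l'; signal a c l'].
Proof. by move=> *; rewrite !interference_fills_free_slots. Qed.

(* The squared gap between two messages' offsets is the same at every
   transmitter: it is the squared gap of a pair seen at the third receiver. *)
Lemma gap_constant b c l l' :
  b != c -> (offset b l - offset c l) ^+ 2 = (offset b l' - offset c l') ^+ 2.
Proof.
move=> bc; have [a /andP[ab ac]] := third_user b c.
have gapE m : (signal a b m - signal a c m) ^+ 2 = (offset b m - offset c m) ^+ 2.
  by rewrite /signal; congr (_ ^+ 2); ring.
rewrite -!gapE; apply: (set2_sym (f := fun u v => (u - v) ^+ 2)); first exact: sqr_gapC.
by apply: interference_pair_constant; rewrite // eq_sym.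
Qed.

Lemma equidistant_receiver : exists a b c,
  [/\ b != a, c != a, b != c &
      forall l, (offset a l - offset b l) ^+ 2 = (offset a l - offset c l) ^+ 2].
Proof.
pose g b c := (offset b 0 - offset c 0) ^+ 2.
have g_pm1 b c : b != c -> g b c \in [:: 1; -1].
  by move=> bc; apply: sqr_F5; rewrite subr_eq0 offset_neq.
have gC b c : g b c = g c b by exact: sqr_gapC.
have gE b c l : b != c -> (offset b l - offset c l) ^+ 2 = g b c.
  exact: gap_constant.
have [E | E | E] := collide_in_pair (g_pm1 0 1 isT) (g_pm1 0 2 isT) (g_pm1 1 2 isT).
- by exists 0, 1, 2; split=> // l; rewrite !gE.
- by exists 1, 0, 2; split=> // l; rewrite !gE // gC.
- by exists 2, 0, 1; split=> // l; rewrite !gE // [g 2 0]gC [g 2 1]gC.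
Qed.

(* An equidistant receiver sees its three dedicated messages collide. *)
Lemma equidistant_receiver_jammed a b c :
  b != a -> c != a -> b != c ->
  ~ (forall l, (offset a l - offset b l) ^+ 2 = (offset a l - offset c l) ^+ 2).
Proof.
move=> ba ca bc equi.
have sumE l : signal a b l + signal a c l = signal a a l *+ 2.
  have midpoint := equidistant_midpoint (offset_neq l bc) (equi l).
  by rewrite /signal addrACA midpoint -mulr2n -mulrnDl.
have sum_const := set2_sym (f := +%R) (@addrC _)
  (interference_pair_constant 0 1 ba ca bc).
rewrite !sumE -(mulr_natl (signal a a 0)) -(mulr_natl (signal a a 1)) in sum_const.
have two_neq0 : (2%:R : 'F_5) != 0 by [].
have := signal_neq (@mac a 0 1 isT).
by rewrite (mulfI two_neq0 sum_const) eqxx.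
Qed.

End Alignment.

Theorem theorem1 (k : 'I_3 -> 'I_3 -> nat) :
  ~ exists p : 'I_3 -> 'I_3 -> 'I_5, [/\ S1 p, S2 k p & S3 k p].
Proof.
case=> p [intra mac inter].
have [a [b [c [ba ca bc equi]]]] := equidistant_receiver intra mac inter.
exact: (equidistant_receiver_jammed intra mac inter ba ca bc equi).
Qed.
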